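(* Let $m,M,T$ be positive integers with $M<T$, let $\Pi_{\mathcal{A}}^M=\{p_a(\mathbf{z}_{1:M}):a\in\mathcal{A}\}$ be a family of probability densities on $\mathbb{R}^{mM}$ and $\mathcal{P}_{\mathcal{B}}^M=\{p_b(\mathbf{z}_t\mid\mathbf{z}_{t-1},\dots,\mathbf{z}_{t-M}):b\in\mathcal{B}\}$ a family of conditional densities on $\mathbb{R}^m$ given $\mathbb{R}^{mM}$. Assume the functions in the trajectory family $\mathcal{P}^{T,M}_{\mathcal{A},\mathcal{B}}=\{p_a(\mathbf{z}_{1:M})\prod_{t=M+1}^Tp_{b_t}(\mathbf{z}_t\mid\mathbf{z}_{t-1},\dots,\mathbf{z}_{t-M}) : a\in\mathcal{A},\ b_t\in\mathcal{B}\}$ are linearly independent under finite mixtures on $\mathbb{R}^{mT}$. Then the MSM family $\mathcal{M}^T(\Pi_{\mathcal{A}}^M,\mathcal{P}_{\mathcal{B}}^M)$ is identifiable up to permutations.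
   Context: A family of functions $\{g_\alpha:\alpha\in\mathcal{S}\}$ defined on a set $D$ is linearly independent under finite mixtures (on $D$) if for every finite $\mathcal{S}_0\subset\mathcal{S}$ the functions $\{g_\alpha:\alpha\in\mathcal{S}_0\}$ are linearly independent as functions on $D$ (the trajectory family is indexed by tuples $(a,b_{M+1},\dots,b_T)$). MSM family $\mathcal{M}^T(\Pi_{\mathcal{A}}^M,\mathcal{P}_{\mathcal{B}}^M)$: all functions $p(\mathbf{z}_{1:T})=\sum_{i=1}^{C}c_ip_{a^i}(\mathbf{z}_{1:M})\prod_{t=M+1}^Tp_{b^i_t}(\mathbf{z}_t\mid\mathbf{z}_{t-1},\dots,\mathbf{z}_{t-M})$, where $K_0,K<+\infty$, $\mathcal{A}_0\subset\mathcal{A}$, $\mathcal{B}_0\subset\mathcal{B}$, $|\mathcal{A}_0|=K_0$, $|\mathcal{B}_0|=K$, $C=K_0K^{T-M}$, $a^i\in\mathcal{A}_0$, $b^i_t\in\mathcal{B}_0$, the tuples $(a^i,b^i_{M+1},\dots,b^i_T)$ pairwise distinct, $c_i>0$, $\sum_ic_i=1$. Identifiable up to permutations: for any $p,\tilde p$ in the family (with data $(C,K_0,K,c_i,a^i,b^i_t)$ and $(\tilde C,\tilde K_0,\tilde K,\tilde c_i,\tilde a^i,\tilde b^i_t)$), $p=\tilde p$ on $\mathbb{R}^{mT}$ implies $C=\tilde C$, $K_0=\tilde K_0$, $K=\tilde K$, and for each $i$ there is $j$ with: (1) $c_i=\tilde c_j$; (2) $b^i_{t_1}=b^i_{t_2}$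 for $M<t_1\ne t_2\le T$ implies $\tilde b^j_{t_1}=\tilde b^j_{t_2}$; (3) $p_{a^i}=p_{\tilde a^j}$ on $\mathbb{R}^{mM}$; (4) $p_{b^i_t}=p_{\tilde b^j_t}$ on $\mathbb{R}^{m(M+1)}$ for all $M<t\le T$. *)

From HB Require Import structures.
From mathcomp Require Import all_boot all_order all_algebra.
From mathcomp Require Import reals.
Set Implicit Arguments. Unset Strict Implicit. Unset Printing Implicit Defensive.
Import Order.TTheory GRing.Theory Num.Theory.
Local Open Scope ring_scope.

(* A point z_{1:T} of R^{mT} is a map 'I_T -> 'rV[R]_m (0-indexed: z (i) is
   z_{i+1} in the paper).  [ext z n] reads z at a natural index (0 outside). *)
Definition ext (R : realType) (m T : nat) (z : 'I_T -> 'rV[R]_m) (n : nat)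
  : 'rV[R]_m :=
  match (insub n : option 'I_T) with Some i => z i | None => 0 end.

(* Trajectory density
   p_a(z_{1:M}) * prod_{t=M+1}^T p_{b_t}(z_t | z_{t-1},...,z_{t-M}).
   pa a : ('I_M -> 'rV_m) -> R  is p_a, with argument (z_1,...,z_M);
   pb b x y is p_b(x | y) with y j = z_{t-1-j} (j < M);
   b : 'I_(T-M) -> B, b k = b_{M+1+k}. *)
Definition traj (R : realType) (m M T : nat) (A B : Type)
  (pa : A -> ('I_M -> 'rV[R]_m) -> R)
  (pb : B -> 'rV[R]_m -> ('I_M -> 'rV[R]_m) -> R)
  (a : A) (b : 'I_(T - M) -> B) (z : 'I_T -> 'rV[R]_m) : R :=
  pa a (fun j : 'I_M => ext z j) *
  \prod_(k < T - M)
     pb (b k) (ext z (M + k)%N) (fun j : 'I_M => ext z (M + k - 1 - j)%N).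

Definition lin_indep_finite_mixtures (R : realType) (I D : Type)
  (g : I -> D -> R) : Prop :=
  forall (n : nat) (idx : 'I_n -> I) (lam : 'I_n -> R),
    injective idx ->
    (forall x : D, \sum_(k < n) lam k * g (idx k) x = 0) ->
    forall k, lam k = 0.

(* p is the MSM density with data (C, K0, K, c_i, a^i, b^i_t):
   A_0 = image of the injective A0 : 'I_K0 -> A (so |A_0| = K0),
   B_0 = image of the injective B0 : 'I_K -> B (so |B_0| = K). *)
Definition is_msm (R : realType) (m M T : nat) (A B : Type)
  (pa : A -> ('I_M -> 'rV[R]_m) -> R)
  (pb : B -> 'rV[R]_m -> ('I_M -> 'rV[R]_m) -> R)
  (p : ('I_T -> 'rV[R]_m) -> R)
  (C K0 K : nat) (c : 'I_C -> R) (a : 'I_C -> A) (b : 'I_C -> 'I_(T - M) -> B)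
  : Prop :=
  exists (A0 : 'I_K0 -> A) (B0 : 'I_K -> B),
    [/\ [/\ injective A0, injective B0 & C = (K0 * K ^ (T - M))%N],
        (forall i, exists k, a i = A0 k),
        (forall i t, exists k, b i t = B0 k),
        injective (fun i => (a i, b i)) &
        [/\ (forall i, 0 < c i),
            \sum_(i < C) c i = 1 &
            (forall z, p z = \sum_(i < C) c i * traj pa pb (a i) (b i) z)]].

Definition msm_identifiable (R : realType) (m M T : nat) (A B : Type)
  (pa : A -> ('I_M -> 'rV[R]_m) -> R)
  (pb : B -> 'rV[R]_m -> ('I_M -> 'rV[R]_m) -> R) : Prop :=
  forall (p p' : ('I_T -> 'rV[R]_m) -> R)
    (C K0 K : nat) (c : 'I_C -> R) (a : 'I_C -> A) (b : 'I_C -> 'I_(T - M) -> B)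
    (C' K0' K' : nat) (c' : 'I_C' -> R) (a' : 'I_C' -> A)
    (b' : 'I_C' -> 'I_(T - M) -> B),
    is_msm pa pb p K0 K c a b ->
    is_msm pa pb p' K0' K' c' a' b' ->
    (forall z, p z = p' z) ->
    [/\ C = C', K0 = K0', K = K' &
      forall i : 'I_C, exists j : 'I_C',
        [/\ c i = c' j,
            (forall t1 t2 : 'I_(T - M), t1 <> t2 ->
                b i t1 = b i t2 -> b' j t1 = b' j t2),
            (forall x, pa (a i) x = pa (a' j) x) &
            (forall (t : 'I_(T - M)) x y, pb (b i t) x y = pb (b' j t) x y)]].

(* Both mixtures are positive combinations of pairwise distinct trajectory
   densities, so linear independence of the trajectory family forces every
   component of one mixture to reappear, with the same weight and the same
   index tuple (a, b_{M+1:T}), in the other.  Since the C = K0 K^(T-M) index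
   tuples are distinct, each mixture uses every combination of one of its K0
   initial components with T - M of its K transition components; so all of
   them occur among the components of the other mixture, which gives
   K0 <= K0' and K <= K', and the reverse inequalities by symmetry. *)
From HB Require Import structures.
From mathcomp Require Import all_boot all_order all_algebra.
From mathcomp Require Import reals boolp.
Set Implicit Arguments. Unset Strict Implicit. Unset Printing Implicit Defensive.
Import Order.TTheory GRing.Theory Num.Theory.
Local Open Scope ring_scope.

Lemma lin_indep_fiber_sum (R : realType) (I : eqType) (D : Type)
    (g : I -> D -> R) :
  lin_indep_finite_mixtures g ->
  forall n (idx : 'I_n -> I) (lam : 'I_n -> R),
  (forall x, \sum_(k < n) lam k * g (idx k) x = 0) ->
  forall k0, \sum_(k < n | idx k == idx k0) lam k = 0.
Proof.
move=> g_indep n idx lam sum0 k0.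
(* Re-index the family injectively by the positions of its distinct members. *)
pose s := undup [seq idx k | k <- enum 'I_n].
have s_uniq : uniq s by exact: undup_uniq.
have idx_in k : idx k \in s by rewrite mem_undup map_f ?mem_enum.
pose pos k : 'I_(size s) := Ordinal (etrans (index_mem _ _) (idx_in k)).
pose idx' (i : 'I_(size s)) := nth (idx k0) s i.
have idx'_pos k : idx' (pos k) = idx k by rewrite /idx' nth_index.
have eq_idx' k i : (idx k == idx' i) = (pos k == i).
  apply/eqP/eqP => [E|<-]; last by rewrite idx'_pos.
  by apply: val_inj; rewrite /= E /idx' index_uniq.
have idx'_inj : injective idx'.
  by move=> i j /eqP; rewrite /idx' nth_uniq // => /eqP /val_inj.
pose lam' i := \sum_(k < n | idx k == idx' i) lam k.
have sum0' x : \sum_(i < size s) lam' i * g (idx' i) x = 0.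
  rewrite -[RHS](sum0 x) [RHS](partition_big pos predT) //=.
  apply: eq_bigr => i _; rewrite /lam' big_distrl /=.
  by apply: eq_big => [k|k /eqP ->]; rewrite ?eq_idx'.
by have := g_indep _ idx' lam' idx'_inj sum0' (pos k0); rewrite /lam' idx'_pos.
Qed.

Lemma mixture_component_match (R : realType) (X D : Type) (g : X -> D -> R)
    C C' (u : 'I_C -> X) (u' : 'I_C' -> X) (c : 'I_C -> R) (c' : 'I_C' -> R) :
  lin_indep_finite_mixtures g -> injective u -> injective u' ->
  (forall i, 0 < c i) ->
  (forall x, \sum_i c i * g (u i) x = \sum_j c' j * g (u' j) x) ->
  forall i, exists j, u' j = u i /\ c i = c' j.
Proof.
move=> g_indep u_inj u'_inj c_gt0 eq_mix i.
(* In the difference of the two mixtures the fiber of u i has total weight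
   c i minus the weight of the (at most one) matching u' j. *)
pose idx (k : 'I_(C + C')) : {classic X} :=
  match split k with inl i => u i | inr j => u' j end.
have split_l (k : 'I_C) : split (lshift C' k) = inl k := unsplitK (inl k).
have split_r (k : 'I_C') : split (rshift C k) = inr k := unsplitK (inr k).
pose lam (k : 'I_(C + C')) := match split k with inl i => c i | inr j => - c' j end.
have sum0 x : \sum_k lam k * g (idx k) x = 0.
  rewrite big_split_ord /= /lam /idx.
  under eq_bigr => k _ do rewrite split_l.
  under [X in _ + X]eq_bigr => k _ do rewrite split_r.
  by rewrite eq_mix -big_split /=; apply: big1 => j _; rewrite mulNr addrN.
have := @lin_indep_fiber_sum R {classic X} D g g_indep _ idx lam sum0 (lshift C' i).
rewrite big_mkcond big_split_ord /= /lam /idx.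
under eq_bigr => k _ do rewrite !split_l.
under [X in _ + X]eq_bigr => k _ do rewrite split_r split_l.
have eq_u k : (u k == u i :> {classic X}) = (k == i).
  by apply/eqP/eqP => [/u_inj|->].
under eq_bigr => k _ do rewrite eq_u.
rewrite -big_mkcond big_pred1_eq.
have [[j uj]|no_j] := pselect (exists j, u' j = u i); last first.
  rewrite big1 ?addr0 => [ci0|k _]; last by case: eqP => // uk; case: no_j; exists k.
  by have := c_gt0 i; rewrite ci0 ltxx.
rewrite (bigD1 j) //= big1 ?addr0 => [|k /eqP kj]; last first.
  by case: eqP => // uk; case: kj; apply: u'_inj; rewrite uk uj.
by rewrite uj eqxx => /eqP; rewrite subr_eq0 => /eqP ci; exists j.
Qed.

Lemma leq_of_range_sub (X : Type) K K' (F : 'I_K -> X) (G : 'I_K' -> X) :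
  injective F -> (forall k, exists k', G k' = F k) -> (K <= K')%N.
Proof.
move=> F_inj /fin_all_exists[h hP].
have h_inj : injective h by move=> k1 k2 /(congr1 G); rewrite !hP => /F_inj.
by have := leq_card _ h_inj; rewrite !card_ord.
Qed.

Lemma sum_ord_eq1_gt0 (R : nzRingType) C (c : 'I_C -> R) :
  \sum_(i < C) c i = 1 -> (0 < C)%N.
Proof. by case: C c => // c; rewrite big_ord0 => /eqP; rewrite eq_sym oner_eq0. Qed.

Section MixtureDesign.

Variables (A B : Type) (n K0 K C : nat).
Variables (A0 : 'I_K0 -> A) (B0 : 'I_K -> B).
Variables (a : 'I_C -> A) (b : 'I_C -> 'I_n -> B).
Hypotheses (A0_inj : injective A0) (B0_inj : injective B0).
Hypothesis C_eq : C = (K0 * K ^ n)%N.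
Hypotheses (a_in : forall i, exists k, a i = A0 k)
           (b_in : forall i t, exists k, b i t = B0 k).
Hypothesis ab_inj : injective (fun i => (a i, b i)).

Lemma design_onto k (f : 'I_n -> 'I_K) :
  exists i, a i = A0 k /\ forall t, b i t = B0 (f t).
Proof.
have [ka kaP] := fin_all_exists a_in.
have [kb kbP] := fin_all_exists (fun i => fin_all_exists (b_in i)).
pose F i : 'I_K0 * {ffun 'I_n -> 'I_K} := (ka i, finfun (kb i)).
have F_inj : injective F.
  move=> i j [ka_ij kb_ij].
  apply: ab_inj; congr pair; first by rewrite kaP ka_ij -kaP.
  apply: funext => t; rewrite kbP (kbP j).
  by have /ffunP/(_ t) := kb_ij; rewrite !ffunE => ->.
have card_le : (#|{: 'I_K0 * {ffun 'I_n -> 'I_K}}| <= #|{: 'I_C}|)%N.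
  by rewrite card_prod card_ffun !card_ord C_eq.
have /codomP[i [ka_i kb_i]] := inj_card_onto F_inj card_le (k, finfun f).
exists i; split=> [|t]; first by rewrite kaP -ka_i.
by rewrite kbP; have /ffunP/(_ t) := kb_i; rewrite !ffunE => ->.
Qed.

Lemma design_sizes_le K0' K' C' (A0' : 'I_K0' -> A) (B0' : 'I_K' -> B)
    (a' : 'I_C' -> A) (b' : 'I_C' -> 'I_n -> B) :
  (0 < n)%N -> (0 < C)%N ->
  (forall j, exists k, a' j = A0' k) -> (forall j t, exists k, b' j t = B0' k) ->
  (forall i, exists j, (a' j, b' j) = (a i, b i)) ->
  (K0 <= K0')%N /\ (K <= K')%N.
Proof.
move=> n_gt0 C_gt0 a'_in b'_in covered.
have /andP[K0_gt0 K_gt0] : (0 < K0)%N && (0 < K)%N.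
  by move: C_gt0; rewrite C_eq muln_gt0 expn_gt0 (negPf (lt0n_neq0 n_gt0)) orbF.
split.
- apply: (leq_of_range_sub (G := A0') A0_inj) => k.
  have [i [ai _]] := design_onto k (fun _ => Ordinal K_gt0).
  have [j [aj _]] := covered i; have [k' ak'] := a'_in j.
  by exists k'; rewrite -ak' aj ai.
- apply: (leq_of_range_sub (G := B0') B0_inj) => k.
  have [i [_ bi]] := design_onto (Ordinal K0_gt0) (fun _ => k).
  have [j [_ bj]] := covered i; have [k' bk'] := b'_in j (Ordinal n_gt0).
  by exists k'; rewrite -bk' bj bi.
Qed.

End MixtureDesign.

Theorem theorem3 (R : realType) (m M T : nat) (A B : Type)
  (pa : A -> ('I_M -> 'rV[R]_m) -> R)
  (pb : B -> 'rV[R]_m -> ('I_M -> 'rV[R]_m) -> R) :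
  (0 < m)%N -> (0 < M)%N -> (M < T)%N ->
  (forall a x, 0 <= pa a x) ->
  (forall b x y, 0 <= pb b x y) ->
  lin_indep_finite_mixtures
    (fun ab : A * ('I_(T - M) -> B) => traj pa pb ab.1 ab.2) ->
  @msm_identifiable R m M T A B pa pb.
Proof.
move=> _ _ MT _ _ traj_indep p p' C K0 K c a b C' K0' K' c' a' b'.
case=> A0 [B0 [[A0_inj B0_inj C_eq] a_in b_in ab_inj [c_gt0 c_sum p_eq]]].
case=> A0' [B0' [[A0'_inj B0'_inj C'_eq] a'_in b'_in ab'_inj [c'_gt0 c'_sum p'_eq]]].
move=> pp'.
have TM_gt0 : (0 < T - M)%N by rewrite subn_gt0.
have mix_eq z : \sum_i c i * traj pa pb (a i) (b i) z
              = \sum_j c' j * traj pa pb (a' j) (b' j) z.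
  by rewrite -p_eq -p'_eq pp'.
have match_ab := mixture_component_match traj_indep ab_inj ab'_inj c_gt0 mix_eq.
have match_ab' := mixture_component_match traj_indep ab'_inj ab_inj c'_gt0
  (fun z => esym (mix_eq z)).
have covered i : exists j, (a' j, b' j) = (a i, b i).
  by have [j [? _]] := match_ab i; exists j.
have covered' j : exists i, (a i, b i) = (a' j, b' j).
  by have [i [? _]] := match_ab' j; exists i.
have [K0_le K_le] := design_sizes_le A0_inj B0_inj C_eq a_in b_in ab_inj
  TM_gt0 (sum_ord_eq1_gt0 c_sum) a'_in b'_in covered.
have [K0'_le K'_le] := design_sizes_le A0'_inj B0'_inj C'_eq a'_in b'_in ab'_inj
  TM_gt0 (sum_ord_eq1_gt0 c'_sum) a_in b_in covered'.
have K0_eq : K0 = K0' by apply/eqP; rewrite eqn_leq K0_le K0'_le.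
have K_eq : K = K' by apply/eqP; rewrite eqn_leq K_le K'_le.
split => //; first by rewrite C_eq C'_eq K0_eq K_eq.
move=> i; have [j [[<- <-] cij]] := match_ab i.
by exists j; split => // t1 t2 _ ->.
Qed.
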